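(* Let $\mathcal C,\mathcal D$ be parsummable categories, $F\colon\mathcal C\to\mathcal D$ a sum-preserving functor of underlying categories, and $\mu\colon\mathbf 2\times\omega\to\omega$ a fixed injection. Then: (1) the functor $F_\mu$ preserves sums, so that $\mathrm{Cyl}(F)=(F_\mu)_*(\mathcal C\times\mathcal D)$ is a well-defined parsummable category, and $I^{(1)}\colon\mathcal C\to\mathrm{Cyl}(F)$ and $I^{(2)}\colon\mathcal D\to\mathrm{Cyl}(F)$ are morphisms of parsummable categories; (2) $I^{(1)}$ is an underlying equivalence of categories if $F$ is an equivalence of categories; (3) $I^{(2)}$ is an underlying equivalence of categories.
   Context: Let $\omega=\{1,2,\dots\}$, $\mathcal M$ the monoid of injections $\omega\to\omega$, $E\mathcal M$ the category with objects $\mathcal M$ and unique morphisms between any two objects. A parsummable category is a small $E\mathcal M$-category $\mathcal C$ (strict action; $u_*$ the action of $u$; $u^X_\circ\colon X\to u_*X$ and more generally $[v,u]\colon u_*\Rightarrow v_*$ the induced isomorphisms) in which every object $X$ has finite support $\mathrm{supp}(X)$ (the intersection of finite $A\subset\omega$ with $u_*X=X$ for all $u$ fixing $A$ pointwise), equipped with an object $0$ of empty support and a functor $+$ on the full subcategory $\mathcal C\boxtimes\mathcal C\subset\mathcal C\times\mathcal C$ of disjointly supported pairs that is strictly unital, associative, commutative and $E\mathcal M$-equivariant; morphisms are strictly equivariant functors preserving $0,+$. The product $\mathcal C\times\mathcal D$ of parsummable categories is a parsummable category with componentwise action and sum. For an injection $\phi\colon A\times\omega\to\omega$, $\phi_*(X_\bullet)=\sum_a\phi(a,-)_*(X_a)$;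 write $\mu_*\colon\mathcal D\times\mathcal D\to\mathcal D$. A functor $G\colon\mathcal C\to\mathcal D$ of underlying categories preserves sums if $G(0)=0$, $G\times G$ maps $\mathcal C\boxtimes\mathcal C$ into $\mathcal D\boxtimes\mathcal D$, and $G$ commutes with $+$ on objects and morphisms. For such $G$, $G_*\mathcal C$ is the parsummable category with objects those of $\mathcal C$, $\mathrm{Hom}_{G_*\mathcal C}(X,Y)=\mathrm{Hom}_{\mathcal D}(GX,GY)$, $\mathcal M$-action on objects from $\mathcal C$, structure isomorphisms $G(u^X_\circ)$, sum of objects from $\mathcal C$ and of morphisms from $\mathcal D$; $I\colon\mathcal C\to G_*\mathcal C$ is the identity on objects and $f\mapsto G(f)$ on morphisms. $F_\mu=\mu_*\circ(F\times\mathrm{id})\colon\mathcal C\times\mathcal D\to\mathcal D$; $\mathrm{Cyl}(F)=(F_\mu)_*(\mathcal C\times\mathcal D)$; $I^{(1)}=I\circ(-,0)\colon\mathcal C\to\mathrm{Cyl}(F)$ and $I^{(2)}=I\circ(0,-)\colon\mathcal D\to\mathrm{Cyl}(F)$. *)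

(* Raw data and the axioms are kept
   separate (raw records + Prop predicates), so that constructions such as
   G_*C, C x D, Cyl(F) can be written down as data and their being
   parsummable categories becomes a provable statement. *)
From mathcomp Require Import all_boot.
From Stdlib Require ClassicalEpsilon.

Set Implicit Arguments.
Unset Strict Implicit.
Unset Printing Implicit Defensive.

(* omega = {1,2,...} is relabelled as nat = {0,1,...} (n |-> n+1). *)
Record injw := Injw { ifun :> nat -> nat; ifun_inj : injective ifun }.

Lemma idw_inj : injective (fun n : nat => n). Proof. by []. Qed.
Definition idw : injw := Injw idw_inj.

Lemma compw_inj (u v : injw) : injective (fun n => u (v n)).
Proof. by move=> x y /(@ifun_inj u) /(@ifun_inj v). Qed.
Definition compw (u v : injw) : injw := Injw (@compw_inj u v).

Record injw2 := Injw2 { mfun :> 'I_2 * nat -> nat; mfun_inj : injective mfun }.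

Lemma slice_inj (m : injw2) (a : 'I_2) : injective (fun n => m (a, n)).
Proof. by move=> x y /(@mfun_inj m) [] ->. Qed.
Definition slice (m : injw2) (a : 'I_2) : injw := Injw (@slice_inj m a).

Definition i0 : 'I_2 := ord0.
Definition i1 : 'I_2 := ord_max.

Record cat := Cat {
  Ob : Type;
  Mor : Type;
  dom : Mor -> Ob;
  cod : Mor -> Ob;
  idm : Ob -> Mor;
  cmp : Mor -> Mor -> Mor   (* cmp g f = g o f *) }.
Arguments dom {c}. Arguments cod {c}. Arguments idm {c}. Arguments cmp {c}.

Record is_cat (C : cat) : Prop := {
  dom_id : forall X : Ob C, dom (idm X) = X;
  cod_id : forall X : Ob C, cod (idm X) = X;
  dom_cmp : forall f g : Mor C, cod f = dom g -> dom (cmp g f) = dom f;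
  cod_cmp : forall f g : Mor C, cod f = dom g -> cod (cmp g f) = cod g;
  id_l : forall f : Mor C, cmp (idm (cod f)) f = f;
  id_r : forall f : Mor C, cmp f (idm (dom f)) = f;
  cmp_assoc : forall f g h : Mor C, cod f = dom g -> cod g = dom h ->
     cmp h (cmp g f) = cmp (cmp h g) f }.

Record functor (C D : cat) := Functor {
  fob :> Ob C -> Ob D;
  fmor : Mor C -> Mor D }.
Arguments fmor {C D}.

Record is_functor (C D : cat) (F : functor C D) : Prop := {
  f_dom : forall f, dom (fmor F f) = F (dom f);
  f_cod : forall f, cod (fmor F f) = F (cod f);
  f_id : forall X, fmor F (idm X) = idm (F X);
  f_cmp : forall f g, cod f = dom g -> fmor F (cmp g f) = cmp (fmor F g) (fmor F f) }.

Definition fcomp (C D E : cat) (F : functor C D) (G : functor D E) : functor C E :=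
  Functor (fun X => G (F X)) (fun f => fmor G (fmor F f)).

Definition is_iso (C : cat) (f : Mor C) : Prop :=
  exists g : Mor C, [/\ dom g = cod f, cod g = dom f,
     cmp g f = idm (dom f) & cmp f g = idm (cod f)].

Definition nat_iso (C D : cat) (F G : functor C D) (a : Ob C -> Mor D) : Prop :=
  (forall X, [/\ dom (a X) = F X, cod (a X) = G X & is_iso (a X)]) /\
  (forall f, cmp (a (cod f)) (fmor F f) = cmp (fmor G f) (a (dom f))).

Definition fid (C : cat) : functor C C := Functor (fun X => X) (fun f => f).

Definition is_equiv (C D : cat) (F : functor C D) : Prop :=
  is_functor F /\
  exists G : functor D C, is_functor G /\
    (exists a, nat_iso (fcomp F G) (fid C) a) /\
    (exists b, nat_iso (fcomp G F) (fid D) b).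

Record pcat := PCat {
  pc :> cat;
  pact : injw -> Ob pc -> Ob pc;
  pactm : injw -> injw -> Mor pc -> Mor pc;      (* EM x C -> C on (u -> v, f) *)
  pzero : Ob pc;
  psum : Ob pc -> Ob pc -> Ob pc;
  psumm : Mor pc -> Mor pc -> Mor pc }.
Arguments pact {p}. Arguments pactm {p}. Arguments pzero {p}.
Arguments psum {p}. Arguments psumm {p}.

Definition supported_on (C : pcat) (X : Ob C) (A : seq nat) : Prop :=
  forall u : injw, (forall a, a \in A -> u a = a) -> pact u X = X.
Definition in_supp (C : pcat) (X : Ob C) (n : nat) : Prop :=
  forall A, supported_on X A -> n \in A.
(* (X, Y) is an object of C [x] C *)
Definition disj (C : pcat) (X Y : Ob C) : Prop :=
  forall n, ~ (in_supp X n /\ in_supp Y n).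

Record is_pcat (C : pcat) : Prop := {
  pc_cat : is_cat C;
  act_dom : forall u v (f : Mor C), dom (pactm u v f) = pact u (dom f);
  act_cod : forall u v (f : Mor C), cod (pactm u v f) = pact v (cod f);
  act_idm : forall u (X : Ob C), pactm u u (idm X) = idm (pact u X);
  act_cmp : forall u v w (f g : Mor C), cod f = dom g ->
     cmp (pactm v w g) (pactm u v f) = pactm u w (cmp g f);
  act_unit_ob : forall X : Ob C, pact idw X = X;
  act_unit_mor : forall f : Mor C, pactm idw idw f = f;
  act_assoc_ob : forall u v (X : Ob C), pact u (pact v X) = pact (compw u v) X;
  act_assoc_mor : forall u u' v v' (f : Mor C),
     pactm u u' (pactm v v' f) = pactm (compw u v) (compw u' v') f;
  fin_supp : forall X : Ob C, exists A, supported_on X A;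
  zero_supp : forall n, ~ in_supp (pzero : Ob C) n;
  sum_dom : forall f g : Mor C, disj (dom f) (dom g) -> disj (cod f) (cod g) ->
     dom (psumm f g) = psum (dom f) (dom g);
  sum_cod : forall f g : Mor C, disj (dom f) (dom g) -> disj (cod f) (cod g) ->
     cod (psumm f g) = psum (cod f) (cod g);
  sum_idm : forall X Y : Ob C, disj X Y -> psumm (idm X) (idm Y) = idm (psum X Y);
  sum_cmp : forall f g f' g' : Mor C, cod f = dom f' -> cod g = dom g' ->
     disj (dom f) (dom g) -> disj (cod f) (cod g) -> disj (cod f') (cod g') ->
     psumm (cmp f' f) (cmp g' g) = cmp (psumm f' g') (psumm f g);
  sum_unit_ob : forall X : Ob C, psum X pzero = X;
  sum_unit_mor : forall f : Mor C, psumm f (idm pzero) = f;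
  sum_assoc_ob : forall X Y Z : Ob C, disj X Y -> disj Y Z -> disj X Z ->
     psum (psum X Y) Z = psum X (psum Y Z);
  sum_assoc_mor : forall f g h : Mor C,
     disj (dom f) (dom g) -> disj (dom g) (dom h) -> disj (dom f) (dom h) ->
     disj (cod f) (cod g) -> disj (cod g) (cod h) -> disj (cod f) (cod h) ->
     psumm (psumm f g) h = psumm f (psumm g h);
  sum_comm_ob : forall X Y : Ob C, disj X Y -> psum X Y = psum Y X;
  sum_comm_mor : forall f g : Mor C, disj (dom f) (dom g) -> disj (cod f) (cod g) ->
     psumm f g = psumm g f;
  sum_act_ob : forall u (X Y : Ob C), disj X Y ->
     pact u (psum X Y) = psum (pact u X) (pact u Y);
  sum_act_mor : forall u v (f g : Mor C), disj (dom f) (dom g) -> disj (cod f) (cod g) ->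
     pactm u v (psumm f g) = psumm (pactm u v f) (pactm u v g) }.

Definition is_pmorph (C D : pcat) (H : functor C D) : Prop :=
  is_functor H /\
  [/\ forall u (X : Ob C), H (pact u X) = pact u (H X),
      forall u v (f : Mor C), fmor H (pactm u v f) = pactm u v (fmor H f),
      H pzero = pzero,
      forall X Y : Ob C, disj X Y -> H (psum X Y) = psum (H X) (H Y) &
      forall f g : Mor C, disj (dom f) (dom g) -> disj (cod f) (cod g) ->
        fmor H (psumm f g) = psumm (fmor H f) (fmor H g)].

Definition preserves_sums (C D : pcat) (G : functor C D) : Prop :=
  [/\ G pzero = pzero,
      forall X Y : Ob C, disj X Y -> disj (G X) (G Y),
      forall X Y : Ob C, disj X Y -> G (psum X Y) = psum (G X) (G Y) &
      forall f g : Mor C, disj (dom f) (dom g) -> disj (cod f) (cod g) ->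
        fmor G (psumm f g) = psumm (fmor G f) (fmor G g)].

Definition prod_cat (C D : cat) : cat :=
  @Cat (Ob C * Ob D)%type (Mor C * Mor D)%type
    (fun f => (dom f.1, dom f.2)) (fun f => (cod f.1, cod f.2))
    (fun X => (idm X.1, idm X.2)) (fun g f => (cmp g.1 f.1, cmp g.2 f.2)).

Definition prod_pcat (C D : pcat) : pcat :=
  @PCat (prod_cat C D)
    (fun u X => (pact u X.1, pact u X.2))
    (fun u v f => (pactm u v f.1, pactm u v f.2))
    (pzero, pzero)
    (fun X Y => (psum X.1 Y.1, psum X.2 Y.2))
    (fun f g => (psumm f.1 g.1, psumm f.2 g.2)).

(* choose x if it satisfies P, otherwise the default d (junk, only used
   on arguments outside the intended domain, e.g. non-composable pairs) *)
Definition mkv (T : Type) (P : T -> Prop) (x : T) (d : {y | P y}) : {y | P y} :=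
  match ClassicalEpsilon.excluded_middle_informative (P x) with
  | left p => exist P x p
  | right _ => d
  end.

(* a morphism X -> Y of G_*C is a morphism G X -> G Y of D *)
Definition valid_push (C D : cat) (G : functor C D) (t : Ob C * Ob C * Mor D) : Prop :=
  dom t.2 = G t.1.1 /\ cod t.2 = G t.1.2.

Definition push_cat (C D : cat) (G : functor C D) (hD : is_cat D) : cat :=
  @Cat (Ob C) {t | valid_push G t}
    (fun t => (sval t).1.1) (fun t => (sval t).1.2)
    (fun X => exist (valid_push G) (X, X, idm (G X))
                    (conj (dom_id hD (G X)) (cod_id hD (G X))))
    (fun t s => mkv ((sval s).1.1, (sval t).1.2, cmp (sval t).2 (sval s).2) s).

(* u^X_o := [u, 1]_X : X = 1_* X -> u_* X ; its inverse is [1, u]_X *)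
Definition circ (C : pcat) (u : injw) (X : Ob C) : Mor C := pactm idw u (idm X).
Definition circinv (C : pcat) (u : injw) (X : Ob C) : Mor C := pactm u idw (idm X).

(* G_* C: action on objects from C, structure isomorphisms G(u^X_o), so the
   EM-action on a morphism f : X -> Y (i.e. f : GX -> GY in D) along u -> v is
   G(v^Y_o) o f o G(u^X_o)^{-1}; 0 and sums of objects from C, sums of
   morphisms from D. *)
Definition push (C D : pcat) (G : functor C D) (hD : is_cat D) : pcat :=
  @PCat (push_cat G hD)
    (fun u X => pact u X)
    (fun u v t => mkv (pact u (sval t).1.1, pact v (sval t).1.2,
                       cmp (fmor G (circ v (sval t).1.2))
                           (cmp (sval t).2 (fmor G (circinv u (sval t).1.1))))
                      t)
    (pzero : Ob C)
    (fun X Y => psum X Y)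
    (fun s t => mkv (psum (sval s).1.1 (sval t).1.1, psum (sval s).1.2 (sval t).1.2,
                     psumm (sval s).2 (sval t).2) s).

Definition push_I (C D : pcat) (G : functor C D) (hD : is_cat D) :
    functor C (push G hD) :=
  @Functor C (push_cat G hD) (fun X => X)
    (fun f => mkv (dom f, cod f, fmor G f) (@idm (push_cat G hD) (dom f))).

(* F_mu = mu_* o (F x id) : C x D -> D *)
Definition Fmu (C D : pcat) (F : functor C D) (m : injw2) : functor (prod_pcat C D) D :=
  @Functor (prod_pcat C D) D
    (fun X => psum (pact (slice m i0) (F X.1)) (pact (slice m i1) X.2))
    (fun f => psumm (pactm (slice m i0) (slice m i0) (fmor F f.1))
                    (pactm (slice m i1) (slice m i1) f.2)).

Definition Cyl (C D : pcat) (F : functor C D) (m : injw2) (hD : is_cat D) : pcat :=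
  push (Fmu F m) hD.

Definition incl1 (C D : pcat) : functor C (prod_pcat C D) :=
  @Functor C (prod_pcat C D) (fun X => (X, pzero)) (fun f => (f, idm pzero)).
Definition incl2 (C D : pcat) : functor D (prod_pcat C D) :=
  @Functor D (prod_pcat C D) (fun Y => (pzero, Y)) (fun g => (idm pzero, g)).

Definition I1 (C D : pcat) (F : functor C D) (m : injw2) (hD : is_cat D) :
    functor C (Cyl F m hD) :=
  fcomp (incl1 C D) (push_I (Fmu F m) hD).
Definition I2 (C D : pcat) (F : functor C D) (m : injw2) (hD : is_cat D) :
    functor D (Cyl F m hD) :=
  fcomp (incl2 C D) (push_I (Fmu F m) hD).

(* Supports behave as expected because [u_* X] depends only on the restriction
   of [u] to a support of [X] (extend that finite injection to a bijection of
   omega and factor [u] through it), and because supports are closed under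
   intersection, so that [supp X] is itself a support.  The two summands of
   [F_mu (X, Y)] live on the disjoint images of [mu(0,-)] and [mu(1,-)], and the
   interchange law for [+] makes [F_mu] preserve sums.  Every axiom of [G_* C]
   holds because the functor [Q : G_* C -> D], [X |-> G X], is faithful and
   reduces it to the corresponding axiom of [C] or [D].  Since [Q] is moreover
   full, [I^(i)] is an equivalence as soon as [Q o I^(i)] is; now
   [Q o I^(1) = mu(0,-)_* o F] and [Q o I^(2) = mu(1,-)_*], and every [u_*] is
   isomorphic to the identity through the structure isomorphisms [[1, u]]. *)

From Pilot Require Import Defs.
From mathcomp Require Import all_boot zify.
From Stdlib Require Import Classical FunctionalExtensionality.

Set Implicit Arguments.
Unset Strict Implicit.
Unset Printing Implicit Defensive.

(** * Injections of omega *)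

Lemma injw_eq (u v : injw) : u =1 v -> u = v.
Proof.
case: u v => f f_inj [g g_inj] /= /functional_extensionality efg; subst g.
by rewrite (proof_irrelevance _ f_inj g_inj).
Qed.

Lemma compw_idl (u : injw) : compw idw u = u.
Proof. exact: injw_eq. Qed.

Lemma sval_inj (T : Type) (P : T -> Prop) : injective (@sval T P).
Proof. by case=> x px [y py] /= exy; subst y; rewrite (proof_irrelevance _ px py). Qed.

Lemma mkv_val (T : Type) (P : T -> Prop) x d : P x -> sval (@mkv T P x d) = x.
Proof. by rewrite /mkv; case: ClassicalEpsilon.excluded_middle_informative. Qed.

Definition nswap (a b n : nat) : nat := if n == a then b else if n == b then a else n.

Lemma nswapK a b : involutive (nswap a b).
Proof.
move=> n; rewrite /nswap.
case: (eqVneq n a) => [->|na]; first by rewrite eqxx; case: eqVneq.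
case: (eqVneq n b) => [->|nb]; first by rewrite eqxx.
by rewrite (negbTE na) (negbTE nb).
Qed.

Definition swapw (a b : nat) : injw := Injw (inv_inj (nswapK a b)).

(* Each step composes with a transposition, so the extension stays a bijection. *)
Lemma injw_extend (A : seq nat) (f : nat -> nat) : {in A &, injective f} ->
  exists w winv : injw, cancel winv w /\ {in A, w =1 f}.
Proof.
elim: A => [|a A IH] f_inj; first by exists idw, idw.
have subA : {subset A <= a :: A} by move=> x xA; rewrite inE xA orbT.
have [w [winv [wK wA]]] := IH (sub_in2 subA f_inj).
have [aA | aNA] := boolP (a \in A).
  by exists w, winv; split=> // x; rewrite inE => /predU1P [->|]; apply: wA.
pose k := winv (f a).
have kNA : k \notin A.
  apply: contra aNA => kA; suff <- : k = a by [].
  by apply: f_inj; rewrite ?inE ?kA ?eqxx ?orbT // -wA // wK.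
exists (compw w (swapw a k)), (compw (swapw a k) winv); split=> [n | x].
  by rewrite /= nswapK wK.
rewrite inE => /predU1P [->|xA] /=; rewrite /nswap; first by rewrite eqxx wK.
have xa : x != a by apply: contraNneq aNA => <-.
have xk : x != k by apply: contraNneq kNA => <-.
by rewrite (negbTE xa) (negbTE xk) wA.
Qed.

(** * Categories, functors and equivalences *)

Section Categories.
Variables (C : Defs.cat) (cC : is_cat C).
Implicit Types (f g h k : Mor C) (X Y : Ob C).

Lemma idl f X : cod f = X -> cmp (idm X) f = f.
Proof. by move=> <-; rewrite (id_l cC). Qed.

Lemma idr f X : dom f = X -> cmp f (idm X) = f.
Proof. by move=> <-; rewrite (id_r cC). Qed.

Lemma iso_id X : is_iso (idm X).
Proof. by exists (idm X); rewrite (dom_id cC) (cod_id cC) idl ?(cod_id cC). Qed.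

Lemma iso_cmp f g : cod f = dom g -> is_iso f -> is_iso g -> is_iso (cmp g f).
Proof.
move=> fg [f' [f'd f'c f'f ff']] [g' [g'd g'c g'g gg']].
have g'f' : cod g' = dom f' by rewrite g'c f'd.
exists (cmp f' g'); rewrite (dom_cmp cC) // (cod_cmp cC) // (dom_cmp cC) // (cod_cmp cC) //.
split=> //.
- rewrite -(cmp_assoc cC) ?(cod_cmp cC) ?g'd // (cmp_assoc cC (f := f)) ?g'd //.
  by rewrite g'g -fg idl // f'f.
- rewrite -(cmp_assoc cC) ?(cod_cmp cC) ?f'c // (cmp_assoc cC (f := g')) ?f'c //.
  by rewrite ff' fg idl -?g'c // gg'.
Qed.

Lemma cmp_conj_cancel a b b' c f g :
  cod a = dom f -> cod f = dom b' -> cod b' = dom b -> cod b = dom g -> cod g = dom c ->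
  cmp b b' = idm (dom b') ->
  cmp (cmp c (cmp g b)) (cmp b' (cmp f a)) = cmp c (cmp (cmp g f) a).
Proof.
move=> af fb' b'b bg gc bb'.
have bb'_cod : cod b = dom b' by rewrite -(cod_cmp cC b'b) bb' (cod_id cC).
rewrite -(cmp_assoc cC) ?(cod_cmp cC) ?(dom_cmp cC) //; congr (cmp c _).
rewrite -(cmp_assoc cC (h := g)) ?(cod_cmp cC) //.
rewrite (cmp_assoc cC (h := b)) ?(cod_cmp cC) // bb' idl ?(cod_cmp cC) //.
by rewrite (cmp_assoc cC) // fb' -bb'_cod.
Qed.

Lemma cmp_conj_conj a a' b b' f :
  cod a' = dom a -> cod a = dom f -> cod f = dom b -> cod b = dom b' ->
  cmp b' (cmp (cmp b (cmp f a)) a') = cmp (cmp b' b) (cmp f (cmp a a')).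
Proof.
move=> a'a af fb bb'.
rewrite -(cmp_assoc cC (h := b)) ?(dom_cmp cC) ?(cod_cmp cC) //.
rewrite (cmp_assoc cC (h := b')) ?(dom_cmp cC) ?(cod_cmp cC) //.
  by rewrite (cmp_assoc cC (h := f)).
by rewrite (dom_cmp cC).
Qed.

End Categories.

Section Functors.
Variables (A B E : Defs.cat).
Implicit Types (F G H : functor A B).

Lemma functor_eq F G : (forall X, F X = G X) -> (forall f, fmor F f = fmor G f) -> F = G.
Proof.
case: F G => F Ff [G Gf] /= /functional_extensionality eFG /functional_extensionality eFGf.
by rewrite eFG eFGf.
Qed.

Lemma functor_comp F (K : functor B E) : is_functor F -> is_functor K -> is_functor (fcomp F K).
Proof.
move=> hF hK; split=> /= [f|f|X|f g fg].
- by rewrite (f_dom hK) (f_dom hF).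
- by rewrite (f_cod hK) (f_cod hF).
- by rewrite (f_id hF) (f_id hK).
- by rewrite (f_cmp hF) // (f_cmp hK) // (f_cod hF) (f_dom hF) fg.
Qed.

End Functors.

Lemma functor_iso (A B : Defs.cat) (F : functor A B) (f : Mor A) :
  is_functor F -> is_iso f -> is_iso (fmor F f).
Proof.
move=> hF [g [gd gc gf fg]]; exists (fmor F g).
rewrite !(f_dom hF) !(f_cod hF) -!(f_cmp hF) ?gd ?gc // gf fg !(f_id hF).
by split.
Qed.

Section NatIsos.
Variables (A B E : Defs.cat).
Implicit Types (F G H : functor A B).

Lemma natiso_id F : is_cat B -> is_functor F -> nat_iso F F (fun X => idm (F X)).
Proof.
move=> cB hF; split=> [X|f]; first by rewrite (dom_id cB) (cod_id cB); split=> //; apply: iso_id.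
by rewrite (idl cB) ?(idr cB) ?(f_dom hF) ?(f_cod hF).
Qed.

Lemma natiso_vcomp F G H a b : is_cat B -> is_functor F -> is_functor G -> is_functor H ->
  nat_iso F G a -> nat_iso G H b -> nat_iso F H (fun X => cmp (b X) (a X)).
Proof.
move=> cB hF hG hH [aiso anat] [biso bnat]; split=> [X|f].
  have [ad ac ai] := aiso X; have [bd bc bi] := biso X.
  by rewrite (dom_cmp cB) ?(cod_cmp cB) ?ac ?bd //; split=> //; apply: iso_cmp; rewrite ?ac ?bd.
have [ad ac _] := aiso (dom f); have [bd bc _] := biso (dom f).
have [ad' ac' _] := aiso (cod f); have [bd' bc' _] := biso (cod f).
rewrite -(cmp_assoc cB) ?(f_cod hF) ?ad' ?ac' ?bd' // anat.
rewrite (cmp_assoc cB) ?(f_dom hG) ?(f_cod hG) ?ac ?bd' // bnat.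
by rewrite -(cmp_assoc cB) ?(f_dom hH) ?(f_cod hH) ?ac ?bd ?bc.
Qed.

Lemma natiso_whiskerl F G (K : functor B E) a :
  is_functor F -> is_functor G -> is_functor K -> nat_iso F G a ->
  nat_iso (fcomp F K) (fcomp G K) (fun X => fmor K (a X)).
Proof.
move=> hF hG hK [aiso anat]; split=> [X|f] /=.
  have [ad ac ai] := aiso X.
  by rewrite (f_dom hK) (f_cod hK) ad ac; split=> //; apply: functor_iso.
have [ad' _ _] := aiso (cod f); have [_ ac _] := aiso (dom f).
by rewrite -!(f_cmp hK) ?(f_cod hF) ?(f_dom hG) ?ad' ?ac // anat.
Qed.

Lemma natiso_whiskerr F G (H : functor E A) a : is_functor H -> nat_iso F G a ->
  nat_iso (fcomp H F) (fcomp H G) (fun X => a (H X)).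
Proof.
move=> hH [aiso anat]; split=> [X|f] /=; first exact: aiso.
by have := anat (fmor H f); rewrite (f_cod hH) (f_dom hH).
Qed.

End NatIsos.

Lemma functor_id (C : Defs.cat) : is_functor (fid C).
Proof. by []. Qed.

Lemma equiv_id (C : Defs.cat) : is_cat C -> is_equiv (fid C).
Proof.
move=> cC; split=> //; exists (fid C); split=> //.
by split; exists (fun X => idm X); apply: natiso_id.
Qed.

Lemma equiv_comp_natiso (A B : Defs.cat) (F : functor A B) (H : functor B B) c :
  is_cat A -> is_cat B -> is_equiv F -> is_functor H -> nat_iso H (fid B) c ->
  is_equiv (fcomp F H).
Proof.
move=> cA cB [hF [K [hK [[a aiso] [b biso]]]]] hH cH.
have hFH := functor_comp hF hH; have hKF := functor_comp hK hF.
have hFK := functor_comp hF hK; have hFHK := functor_comp hFH hK.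
have hKFH := functor_comp hK hFH.
split=> //; exists K; split=> //; split.
- exists (fun X => cmp (a X) (fmor K (c (F X)))).
  apply: (natiso_vcomp (G := fcomp F K)) aiso => //.
  exact: (natiso_whiskerl hFH (functor_comp hF (functor_id B)) hK (natiso_whiskerr hF cH)).
- exists (fun Y => cmp (b Y) (c (F (K Y)))).
  apply: (natiso_vcomp (G := fcomp K F)) biso => //.
  exact: (natiso_whiskerr (G := fid B) hKF cH).
Qed.

Definition faithful (C D : Defs.cat) (Q : functor C D) : Prop :=
  forall f g : Mor C, dom f = dom g -> cod f = cod g -> fmor Q f = fmor Q g -> f = g.

Definition full_by (C D : Defs.cat) (Q : functor C D) (lift : Ob C -> Ob C -> Mor D -> Mor C) :
  Prop :=
  forall X Y h, dom h = Q X -> cod h = Q Y ->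
    [/\ dom (lift X Y h) = X, cod (lift X Y h) = Y & fmor Q (lift X Y h) = h].

Section FullyFaithful.
Variables (P D : Defs.cat) (cP : is_cat P).
Variables (Q : functor P D) (lift : Ob P -> Ob P -> Mor D -> Mor P).
Hypotheses (hQ : is_functor Q) (Q_faithful : faithful Q) (Q_full : full_by Q lift).

Lemma faithful_reflects_iso (t : Mor P) : is_iso (fmor Q t) -> is_iso t.
Proof.
case=> g [gd gc gt tg]; rewrite (f_cod hQ) in gd; rewrite (f_dom hQ) in gc.
have [sd sc sQ] := Q_full gd gc.
exists (lift (cod t) (dom t) g); split=> //; apply: Q_faithful;
  rewrite ?(dom_cmp cP) ?(cod_cmp cP) ?(dom_id cP) ?(cod_id cP) ?sd ?sc //.
- by rewrite (f_cmp hQ) ?sc // sQ gt (f_id hQ) (f_dom hQ).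
- by rewrite (f_cmp hQ) ?sd // sQ tg (f_id hQ) (f_cod hQ).
Qed.

(* The quasi-inverse of [J] is [K o Q] for a quasi-inverse [K] of [Q o J]; the
   counit [J K Q => id] is the lift along [Q] of the counit [Q J K => id]. *)
Lemma equiv_of_faithful_comp (E : Defs.cat) (J : functor E P) :
  is_functor J -> is_equiv (fcomp J Q) -> is_equiv J.
Proof.
move=> hJ [_ [K [hK [[a aiso] [b [biso bnat]]]]]].
pose b' Z := lift (J (K (Q Z))) Z (b (Q Z)).
have b'E Z : [/\ dom (b' Z) = J (K (Q Z)), cod (b' Z) = Z & fmor Q (b' Z) = b (Q Z)].
  by have [bd bc _] := biso (Q Z); apply: Q_full.
split=> //; exists (fcomp Q K); split; first exact: functor_comp.
split; first by exists a.
exists b'; split=> [Z|t].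
  have [bd bc bQ] := b'E Z; split=> //.
  by apply: faithful_reflects_iso; rewrite bQ; case: (biso (Q Z)).
have [bd bc bQ] := b'E (cod t); have [bd' bc' bQ'] := b'E (dom t).
have tb : cod (fmor J (fmor K (fmor Q t))) = dom (b' (cod t)).
  by rewrite bd (f_cod hJ) (f_cod hK) (f_cod hQ).
apply: Q_faithful => /=; rewrite ?(dom_cmp cP) ?(cod_cmp cP) //.
- by rewrite bd' (f_dom hJ) (f_dom hK) (f_dom hQ).
- rewrite !(f_cmp hQ) // bQ bQ'.
  by have := bnat (fmor Q t); rewrite (f_cod hQ) (f_dom hQ).
Qed.

End FullyFaithful.

(** * Parsummable categories *)

Section Supports.
Variables (C : pcat) (hC : is_pcat C).
Implicit Types (X Y : Ob C) (A B : seq nat) (u v : injw).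

Lemma act_agree X A u v : supported_on X A -> {in A, u =1 v} -> pact u X = pact v X.
Proof.
move=> sX uv.
have u_inj : {in A &, injective u} by move=> a b _ _; apply: ifun_inj.
have [w [winv [wK wA]]] := injw_extend u_inj.
suff actw (z : injw) : {in A, z =1 u} -> pact z X = pact w X.
  by rewrite (actw u) ?(actw v) // => a aA; rewrite uv.
move=> zu; have -> : z = compw w (compw winv z) by apply: injw_eq => n /=; rewrite wK.
rewrite -(act_assoc_ob hC); congr pact; apply: sX => a aA /=.
by apply: (@ifun_inj w); rewrite wK zu ?wA.
Qed.

Lemma supported_on_act X A u : supported_on X A -> supported_on (pact u X) (map u A).
Proof.
move=> sX w wfix; rewrite (act_assoc_ob hC); apply: (act_agree sX) => a aA /=.
by rewrite wfix ?map_f.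
Qed.

(* Move [B] out of the way of [A] and of [u A] by an injection fixing [A], then
   extend [u] on [A] by the identity on the moved copy of [B]. *)
Lemma supported_on_inter X A B : supported_on X A -> supported_on X B ->
  supported_on X [seq a <- A | a \in B].
Proof.
move=> sA sB u uAB.
pose N := (\max_(n <- A ++ B ++ map u A) n).+1.
have ltN x : x \in A ++ B ++ map u A -> x < N by move=> xin; rewrite ltnS (leq_bigmax_seq x xin).
have ltNA a : a \in A -> a < N by move=> aA; apply: ltN; rewrite mem_cat aA.
have ltNu a : a \in A -> u a < N by move=> aA; apply: ltN; rewrite !mem_cat map_f ?orbT.
pose g n := if n \in A then n else N + n.
have g_inj : {in A ++ B &, injective g}.
  move=> a b _ _; rewrite /g.
  by case: ifP => aA; case: ifP => bA; move: (ltNA a) (ltNA b); rewrite ?aA ?bA; lia.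
have [tau [_ [_ tauE]]] := injw_extend g_inj.
have tauX : pact tau X = X.
  rewrite (act_agree (v := idw) sA) ?(act_unit_ob hC) // => a aA.
  by rewrite tauE ?mem_cat ?aA //= /g aA.
have sgB : supported_on X (map g B).
  have -> : map g B = map tau B by apply/eq_in_map => b bB; rewrite tauE // mem_cat bB orbT.
  by rewrite -{1}tauX; apply: supported_on_act.
pose h n := if n \in A then u n else n.
have h_inj : {in A ++ map g B &, injective h}.
  have gB x : x \in map g B -> x \notin A -> N <= x.
    by case/mapP=> b _ ->; rewrite /g; case: ifP => [->|_ _] //; apply: leq_addr.
  move=> a b; rewrite !mem_cat /h.
  case: ifP => aA; case: ifP => bA /= ain bin; last by [].
  - exact: ifun_inj.
  - by move: (ltNu a aA) (gB b bin (negbT bA)); lia.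
  - by move: (ltNu b bA) (gB a ain (negbT aA)); lia.
have [w [_ [_ wE]]] := injw_extend h_inj.
have wX : pact w X = X.
  apply: sgB => x /mapP [b bB ->]; rewrite wE ?mem_cat ?map_f ?orbT // /h /g.
  have [bA|bNA] := boolP (b \in A); first by rewrite bA uAB // mem_filter bA bB.
  by rewrite ifN //; apply/negP => /ltNA; lia.
by rewrite -[RHS]wX; apply: (act_agree sA) => a aA; rewrite wE ?mem_cat ?aA // /h aA.
Qed.

Lemma supported_on_min X : exists A, supported_on X A /\ forall n, n \in A -> in_supp X n.
Proof.
have [A sA] := fin_supp hC X.
move: {2}(size A) (leqnn (size A)) => k; elim: k A sA => [|k IH] A sA szA.
  by exists A; split=> // n; move: szA; rewrite leqn0 => /nilP ->.
have [[a aA naX] | all_in] := classic (exists2 a, a \in A & ~ in_supp X a); last first.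
  by exists A; split=> // n nA; apply: NNPP => nX; apply: all_in; exists n.
have [B [sB aB]] : exists B, supported_on X B /\ a \notin B.
  apply: NNPP => nB; apply: naX => B sB; apply/negPn/negP => aB; apply: nB; by exists B.
apply: (IH _ (supported_on_inter sA sB)); rewrite -ltnS; apply: leq_trans szA.
rewrite size_filter -(count_predC (mem B) A) -addn1 leq_add2l -has_count.
by apply/hasP; exists a.
Qed.

Lemma in_supp_act X u n : in_supp (pact u X) n -> exists2 k, in_supp X k & n = u k.
Proof.
have [A [sA Asupp]] := supported_on_min X.
by move=> /(_ _ (supported_on_act (u := u) sA)) /mapP [k /Asupp]; exists k.
Qed.

Lemma in_supp_sum X Y n : disj X Y -> in_supp (psum X Y) n -> in_supp X n \/ in_supp Y n.
Proof.
move=> dXY; have [A [sA Asupp]] := supported_on_min X.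
have [B [sB Bsupp]] := supported_on_min Y.
have sAB : supported_on (psum X Y) (A ++ B).
  move=> w wfix; rewrite (sum_act_ob hC _ dXY) sA ?sB // => a aA; apply: wfix;
    by rewrite mem_cat aA ?orbT.
by move=> /(_ _ sAB); rewrite mem_cat => /orP [/Asupp|/Bsupp]; [left|right].
Qed.

Lemma act_zero u : pact u (pzero : Ob C) = pzero.
Proof.
have [[|a A] [sA Asupp]] := supported_on_min pzero; first exact: sA.
by case: (zero_supp hC (Asupp a (mem_head a A))).
Qed.

Lemma disj_sym X Y : disj X Y -> disj Y X.
Proof. by move=> dXY n [nY nX]; apply: (dXY n). Qed.

Lemma disj0l X : disj pzero X.
Proof. by move=> n [n0 _]; apply: (zero_supp hC n0). Qed.

Lemma disj0r X : disj X pzero.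
Proof. by apply/disj_sym/disj0l. Qed.

Lemma disj_act X Y u : disj X Y -> disj (pact u X) (pact u Y).
Proof.
move=> dXY n [/in_supp_act [k kX ->] /in_supp_act [j jY /ifun_inj ejk]].
by apply: (dXY k); rewrite {2}ejk.
Qed.

Lemma disj_sumr X Y Z : disj X Y -> disj X Z -> disj Y Z -> disj X (psum Y Z).
Proof.
move=> dXY dXZ dYZ n [nX /(in_supp_sum dYZ) [nY|nZ]]; [exact: (dXY n) | exact: (dXZ n)].
Qed.

Lemma disj_suml X Y Z : disj X Z -> disj Y Z -> disj X Y -> disj (psum X Y) Z.
Proof. by move=> dXZ dYZ dXY; apply/disj_sym/disj_sumr => //; apply: disj_sym. Qed.

Lemma sum0l X : psum pzero X = X.
Proof. by rewrite (sum_comm_ob hC (@disj0l X)) (sum_unit_ob hC). Qed.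

(* Eckmann-Hilton: [h + h] equals both [h] and [h o h], and [h] is invertible. *)
Lemma actm_zero u v : pactm u v (idm (pzero : Ob C)) = idm pzero.
Proof.
have cC := pc_cat hC; have d00 := @disj0l (pzero : Ob C).
set h := pactm u v _; set k := pactm v u (idm (pzero : Ob C)).
have hd : dom h = pzero by rewrite (act_dom hC) (dom_id cC) act_zero.
have hc : cod h = pzero by rewrite (act_cod hC) (cod_id cC) act_zero.
have kd : dom k = pzero by rewrite (act_dom hC) (dom_id cC) act_zero.
have hh_h : psumm h h = h.
  by rewrite -(sum_act_mor hC) ?(dom_id cC) ?(cod_id cC) // (sum_idm hC d00) (sum_unit_ob hC).
have hh_hoh : psumm h h = cmp h h.
  rewrite -{1}[h](idr cC hd) -{2}[h](idl cC hc).
  rewrite (sum_cmp hC) ?hd ?hc ?(dom_id cC) ?(cod_id cC) // (sum_unit_mor hC).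
  by rewrite (sum_comm_mor hC) ?hd ?hc ?(dom_id cC) ?(cod_id cC) // (sum_unit_mor hC).
have kh : cmp k h = idm pzero.
  rewrite (act_cmp hC) ?(dom_id cC) ?(cod_id cC) // (idl cC) ?(cod_id cC) //.
  by rewrite (act_idm hC) act_zero.
by rewrite -kh -{2}hh_h hh_hoh (cmp_assoc cC) ?hc ?hd // kh (idl cC).
Qed.

End Supports.

Definition actf (C : pcat) (u : injw) : functor C C := Functor (pact u) (pactm u u).

Section StructureIsos.
Variables (C : pcat) (hC : is_pcat C).
Let cC := pc_cat hC.
Implicit Types (X Y : Ob C) (f : Mor C) (u v : injw).

Lemma circ_dom u X : dom (circ u X) = X.
Proof. by rewrite (act_dom hC) (dom_id cC) (act_unit_ob hC). Qed.

Lemma circ_cod u X : cod (circ u X) = pact u X.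
Proof. by rewrite (act_cod hC) (cod_id cC). Qed.

Lemma circinv_dom u X : dom (circinv u X) = pact u X.
Proof. by rewrite (act_dom hC) (dom_id cC). Qed.

Lemma circinv_cod u X : cod (circinv u X) = X.
Proof. by rewrite (act_cod hC) (cod_id cC) (act_unit_ob hC). Qed.

Lemma circinv_circ u X : cmp (circinv u X) (circ u X) = idm X.
Proof.
rewrite (act_cmp hC) ?(dom_id cC) ?(cod_id cC) // (idl cC) ?(cod_id cC) //.
exact: (act_unit_mor hC).
Qed.

Lemma circ_circinv u X : cmp (circ u X) (circinv u X) = idm (pact u X).
Proof.
rewrite (act_cmp hC) ?(dom_id cC) ?(cod_id cC) // (idl cC) ?(cod_id cC) //.
exact: (act_idm hC).
Qed.

Lemma iso_circinv u X : is_iso (circinv u X).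
Proof.
by exists (circ u X); rewrite circ_dom circ_cod circinv_dom circinv_cod circinv_circ circ_circinv.
Qed.

Lemma circ_id X : circ idw X = idm X.
Proof. exact: (act_unit_mor hC). Qed.

Lemma circinv_id X : circinv idw X = idm X.
Proof. exact: (act_unit_mor hC). Qed.

Lemma circ_comp u v Y : cmp (circ u (pact v Y)) (circ v Y) = circ (compw u v) Y.
Proof.
rewrite /circ -(act_idm hC) (act_assoc_mor hC) compw_idl.
by rewrite (act_cmp hC) ?(dom_id cC) ?(cod_id cC) // (idl cC) ?(cod_id cC).
Qed.

Lemma circinv_comp u v X : cmp (circinv v X) (circinv u (pact v X)) = circinv (compw u v) X.
Proof.
rewrite /circinv -(act_idm hC) (act_assoc_mor hC) compw_idl.
by rewrite (act_cmp hC) ?(dom_id cC) ?(cod_id cC) // (idl cC) ?(cod_id cC).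
Qed.

Lemma circ_sum v X Y : disj X Y -> circ v (psum X Y) = psumm (circ v X) (circ v Y).
Proof.
by move=> dXY; rewrite /circ -(sum_idm hC dXY) (sum_act_mor hC) ?(dom_id cC) ?(cod_id cC).
Qed.

Lemma circinv_sum v X Y : disj X Y -> circinv v (psum X Y) = psumm (circinv v X) (circinv v Y).
Proof.
by move=> dXY; rewrite /circinv -(sum_idm hC dXY) (sum_act_mor hC) ?(dom_id cC) ?(cod_id cC).
Qed.

Lemma actm_conj u v f : pactm u v f = cmp (circ v (cod f)) (cmp f (circinv u (dom f))).
Proof.
have fu : cmp f (circinv u (dom f)) = pactm u idw f.
  rewrite -{1}(act_unit_mor hC f) (act_cmp hC) ?(cod_id cC) //.
  by rewrite (idr cC) ?(dom_id cC).
by rewrite fu (act_cmp hC) ?(dom_id cC) ?(act_cod hC) // (idl cC).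
Qed.

Lemma circinv_nat u f : cmp (circinv u (cod f)) (pactm u u f) = cmp f (circinv u (dom f)).
Proof.
rewrite /circinv (act_cmp hC) ?(dom_id cC) // (idl cC) //.
by rewrite -[X in cmp X _](act_unit_mor hC f) (act_cmp hC) ?(cod_id cC) // (idr cC).
Qed.

Lemma actf_functor u : is_functor (actf C u).
Proof.
split=> [f|f|X|f g fg] /=.
- exact: (act_dom hC).
- exact: (act_cod hC).
- exact: (act_idm hC).
- by rewrite (act_cmp hC).
Qed.

Lemma actf_natiso u : nat_iso (actf C u) (fid C) (circinv u).
Proof.
split=> [X|f]; last exact: circinv_nat.
by rewrite circinv_dom circinv_cod; split=> //; apply: iso_circinv.
Qed.

End StructureIsos.

Lemma prod_is_cat (C D : Defs.cat) : is_cat C -> is_cat D -> is_cat (prod_cat C D).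
Proof.
move=> cC cD; split.
- by move=> [X1 X2] /=; rewrite (dom_id cC) (dom_id cD).
- by move=> [X1 X2] /=; rewrite (cod_id cC) (cod_id cD).
- by move=> [f1 f2] [g1 g2] /= [e1 e2]; rewrite (dom_cmp cC) ?(dom_cmp cD).
- by move=> [f1 f2] [g1 g2] /= [e1 e2]; rewrite (cod_cmp cC) ?(cod_cmp cD).
- by move=> [f1 f2] /=; rewrite (id_l cC) (id_l cD).
- by move=> [f1 f2] /=; rewrite (id_r cC) (id_r cD).
- move=> [f1 f2] [g1 g2] [h1 h2] /= [e1 e2] [e3 e4].
  by rewrite (cmp_assoc cC) ?(cmp_assoc cD).
Qed.

Section Products.
Variables (C D : pcat) (hC : is_pcat C) (hD : is_pcat D).
Local Notation P := (prod_pcat C D).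

Lemma in_supp_pair (X1 : Ob C) (X2 : Ob D) n :
  in_supp (C := P) (X1, X2) n <-> in_supp X1 n \/ in_supp X2 n.
Proof.
split=> [nX|[nX|nX] A sA]; last 2 first.
- by apply: nX => u ufix; case: (sA u ufix).
- by apply: nX => u ufix; case: (sA u ufix).
have [A [sA Asupp]] := supported_on_min hC X1; have [B [sB Bsupp]] := supported_on_min hD X2.
have sAB : supported_on (C := P) (X1, X2) (A ++ B).
  by move=> u ufix /=; rewrite sA ?sB // => a aA; apply: ufix; rewrite mem_cat aA ?orbT.
by move: (nX _ sAB); rewrite mem_cat => /orP [/Asupp|/Bsupp]; [left|right].
Qed.

Lemma disj_pair (X Y : Ob P) : disj X Y -> disj X.1 Y.1 /\ disj X.2 Y.2.
Proof.
case: X Y => [X1 X2] [Y1 Y2] dXY.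
by split=> n [nX nY]; apply: (dXY n); rewrite !in_supp_pair; split; [left|left|right|right].
Qed.

Lemma disj_pair_l (X Y : Ob C) : disj X Y -> disj (C := P) (X, pzero) (Y, pzero).
Proof.
move=> dXY n; rewrite !in_supp_pair.
by case=> [[nX|n0] [nY|n0']];
  [exact: (dXY n) | exact: (zero_supp hD n0') | exact: (zero_supp hD n0)..].
Qed.

Lemma disj_pair_r (X Y : Ob D) : disj X Y -> disj (C := P) (pzero, X) (pzero, Y).
Proof.
move=> dXY n; rewrite !in_supp_pair.
by case=> [[n0|nX] [n0'|nY]];
  [exact: (zero_supp hC n0).. | exact: (zero_supp hC n0') | exact: (dXY n)].
Qed.

Lemma prod_is_pcat : is_pcat P.
Proof.
split; first exact: prod_is_cat (pc_cat hC) (pc_cat hD).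
- by move=> u v [f1 f2] /=; rewrite !(act_dom hC) !(act_dom hD).
- by move=> u v [f1 f2] /=; rewrite !(act_cod hC) !(act_cod hD).
- by move=> u [X1 X2] /=; rewrite (act_idm hC) (act_idm hD).
- by move=> u v w [f1 f2] [g1 g2] /= [e1 e2]; rewrite (act_cmp hC) ?(act_cmp hD).
- by move=> [X1 X2] /=; rewrite (act_unit_ob hC) (act_unit_ob hD).
- by move=> [f1 f2] /=; rewrite (act_unit_mor hC) (act_unit_mor hD).
- by move=> u v [X1 X2] /=; rewrite (act_assoc_ob hC) (act_assoc_ob hD).
- by move=> u u' v v' [f1 f2] /=; rewrite (act_assoc_mor hC) (act_assoc_mor hD).
- move=> [X1 X2]; have [A sA] := fin_supp hC X1; have [B sB] := fin_supp hD X2.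
  by exists (A ++ B) => u ufix /=; rewrite sA ?sB // => a aA; apply: ufix; rewrite mem_cat aA ?orbT.
- by move=> n; rewrite in_supp_pair => -[]; apply: zero_supp.
- move=> [f1 f2] [g1 g2] /disj_pair [d1 d2] /disj_pair [c1 c2] /=.
  by rewrite (sum_dom hC) ?(sum_dom hD).
- move=> [f1 f2] [g1 g2] /disj_pair [d1 d2] /disj_pair [c1 c2] /=.
  by rewrite (sum_cod hC) ?(sum_cod hD).
- by move=> [X1 X2] [Y1 Y2] /disj_pair [d1 d2] /=; rewrite (sum_idm hC) ?(sum_idm hD).
- move=> [f1 f2] [g1 g2] [f1' f2'] [g1' g2'] /= [e1 e2] [e3 e4].
  move=> /disj_pair [d1 d2] /disj_pair [c1 c2] /disj_pair [b1 b2] /=.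
  by rewrite (sum_cmp hC) ?(sum_cmp hD).
- by move=> [X1 X2] /=; rewrite (sum_unit_ob hC) (sum_unit_ob hD).
- by move=> [f1 f2] /=; rewrite (sum_unit_mor hC) (sum_unit_mor hD).
- move=> [X1 X2] [Y1 Y2] [Z1 Z2] /disj_pair [d1 d2] /disj_pair [c1 c2] /disj_pair [b1 b2] /=.
  by rewrite (sum_assoc_ob hC) ?(sum_assoc_ob hD).
- move=> [f1 f2] [g1 g2] [h1 h2] /disj_pair [d1 d2] /disj_pair [c1 c2] /disj_pair [b1 b2].
  move=> /disj_pair [d1' d2'] /disj_pair [c1' c2'] /disj_pair [b1' b2'] /=.
  by rewrite (sum_assoc_mor hC) ?(sum_assoc_mor hD).
- by move=> [X1 X2] [Y1 Y2] /disj_pair [d1 d2] /=; rewrite (sum_comm_ob hC d1) (sum_comm_ob hD d2).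
- move=> [f1 f2] [g1 g2] /disj_pair [d1 d2] /disj_pair [c1 c2] /=.
  by rewrite (sum_comm_mor hC d1 c1) (sum_comm_mor hD d2 c2).
- by move=> u [X1 X2] [Y1 Y2] /disj_pair [d1 d2] /=; rewrite (sum_act_ob hC) ?(sum_act_ob hD).
- move=> u v [f1 f2] [g1 g2] /disj_pair [d1 d2] /disj_pair [c1 c2] /=.
  by rewrite (sum_act_mor hC) ?(sum_act_mor hD).
Qed.

End Products.

Section Interchange.
Variables (C : pcat) (hC : is_pcat C).

Lemma sum_interchange (a b c d : Ob C) :
  disj a b -> disj a c -> disj a d -> disj b c -> disj b d -> disj c d ->
  psum (psum a b) (psum c d) = psum (psum a c) (psum b d).
Proof.
move=> dab dac dad dbc dbd dcd; have dcb := disj_sym dbc.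
rewrite (sum_assoc_ob hC dab (disj_sumr hC dbc dbd dcd) (disj_sumr hC dac dad dcd)).
rewrite -(sum_assoc_ob hC dbc dcd dbd) (sum_comm_ob hC dbc) (sum_assoc_ob hC dcb dbd dcd).
by rewrite -(sum_assoc_ob hC dac (disj_sumr hC dcb dcd dbd) (disj_sumr hC dab dad dbd)).
Qed.

Lemma summ_interchange (a b c d : Mor C) :
  disj (dom a) (dom b) -> disj (dom a) (dom c) -> disj (dom a) (dom d) ->
  disj (dom b) (dom c) -> disj (dom b) (dom d) -> disj (dom c) (dom d) ->
  disj (cod a) (cod b) -> disj (cod a) (cod c) -> disj (cod a) (cod d) ->
  disj (cod b) (cod c) -> disj (cod b) (cod d) -> disj (cod c) (cod d) ->
  psumm (psumm a b) (psumm c d) = psumm (psumm a c) (psumm b d).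
Proof.
move=> dab dac dad dbc dbd dcd cab cac cad cbc cbd ccd.
have dcb := disj_sym dbc; have ccb := disj_sym cbc.
rewrite (sum_assoc_mor hC dab _ _ cab) ?(sum_dom hC) ?(sum_cod hC) //.
rewrite -(sum_assoc_mor hC dbc dcd dbd cbc ccd cbd) (sum_comm_mor hC dbc cbc).
rewrite (sum_assoc_mor hC dcb dbd dcd ccb cbd ccd).
rewrite -(sum_assoc_mor hC dac) ?(sum_dom hC) ?(sum_cod hC) //.
all: by apply: (disj_sumr hC).
Qed.

Lemma summ0l (f : Mor C) : psumm (idm pzero) f = f.
Proof.
have cC := pc_cat hC.
by rewrite (sum_comm_mor hC) ?(sum_unit_mor hC) ?(dom_id cC) ?(cod_id cC) //; apply: disj0l.
Qed.

Lemma disj_slices (m : injw2) (X Y : Ob C) : disj (pact (slice m i0) X) (pact (slice m i1) Y).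
Proof.
by move=> n [/(in_supp_act hC) [k _ ->] /(in_supp_act hC) [j _ /mfun_inj]].
Qed.

End Interchange.

(** * The mapping cylinder *)

Section MappingCylinderFunctor.
Variables (C D : pcat) (hC : is_pcat C) (hD : is_pcat D) (F : functor C D) (m : injw2).
Hypotheses (hF : is_functor F) (hFs : preserves_sums F).
Local Notation s0 := (slice m i0).
Local Notation s1 := (slice m i1).

Lemma Fmu_functor : is_functor (Fmu F m).
Proof.
have sl (X Y : Ob D) : disj (pact s0 X) (pact s1 Y) := @disj_slices D hD m X Y.
split=> [[f1 f2]|[f1 f2]|[X1 X2]|[f1 f2] [g1 g2] [e1 e2]] /=.
- by rewrite (sum_dom hD) ?(act_dom hD) ?(act_cod hD) ?(f_dom hF).
- by rewrite (sum_cod hD) ?(act_dom hD) ?(act_cod hD) ?(f_cod hF).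
- by rewrite (f_id hF) !(act_idm hD) (sum_idm hD).
rewrite (f_cmp hF) // -(act_cmp hD s0 s0 s0) ?(f_dom hF) ?(f_cod hF) ?e1 //.
rewrite -(act_cmp hD s1 s1 s1) //.
by rewrite (sum_cmp hD) ?(act_dom hD) ?(act_cod hD) ?(f_dom hF) ?(f_cod hF) ?e1 ?e2.
Qed.

Lemma Fmu_sums : preserves_sums (Fmu F m).
Proof.
case: hFs => F0 Fd Fs Fsm.
have sl (X Y : Ob D) := @disj_slices D hD m X Y.
have d0 (X Y : Ob C) : disj X Y -> disj (pact s0 (F X)) (pact s0 (F Y)).
  by move=> dXY; apply/(disj_act hD)/Fd.
have d1 (X Y : Ob D) : disj X Y -> disj (pact s1 X) (pact s1 Y) by apply: (disj_act hD).
have in_supp_mu (X Y : Ob D) n : in_supp (psum (pact s0 X) (pact s1 Y)) n ->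
    in_supp (pact s0 X) n \/ in_supp (pact s1 Y) n by apply/(in_supp_sum hD)/sl.
have sl' (X Y : Ob D) : disj (pact s1 X) (pact s0 Y) by apply/disj_sym/sl.
split.
- by rewrite /= F0 !(act_zero hD) (sum_unit_ob hD).
- move=> [X1 X2] [Y1 Y2] /(disj_pair hC hD) /= [dX dY] n.
  case=> /in_supp_mu nX /in_supp_mu nY.
  case: nX => nX; case: nY => nY.
  + exact: (d0 _ _ dX n (conj nX nY)).
  + exact: (sl _ _ n (conj nX nY)).
  + exact: (sl' _ _ n (conj nX nY)).
  + exact: (d1 _ _ dY n (conj nX nY)).
- move=> [X1 X2] [Y1 Y2] /(disj_pair hC hD) /= [dX dY].
  have dFX := Fd _ _ dX; rewrite Fs // !(sum_act_ob hD) //.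
  by symmetry; apply: (sum_interchange hD) => //; [apply: d0 | apply: d1].
- move=> [f1 f2] [g1 g2] /(disj_pair hC hD) /= [dX dY] /(disj_pair hC hD) /= [cX cY].
  have dFX := Fd _ _ dX; have cFX := Fd _ _ cX.
  rewrite Fsm // !(sum_act_mor hD) ?(f_dom hF) ?(f_cod hF) //.
  symmetry; apply: (summ_interchange hD);
    rewrite ?(act_dom hD) ?(act_cod hD) ?(f_dom hF) ?(f_cod hF) //; by [apply: d0 | apply: d1].
Qed.

Lemma Fmu_left X : Fmu F m (X, pzero) = pact s0 (F X).
Proof. by rewrite /= (act_zero hD) (sum_unit_ob hD). Qed.

Lemma Fmu_right Y : Fmu F m (pzero, Y) = pact s1 Y.
Proof. by case: hFs => F0 _ _ _; rewrite /= F0 (act_zero hD) (sum0l hD). Qed.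

Lemma Fmu_left_mor f : fmor (Fmu F m) (f, idm pzero) = pactm s0 s0 (fmor F f).
Proof. by rewrite /= (actm_zero hD) (sum_unit_mor hD). Qed.

Lemma Fmu_right_mor g : fmor (Fmu F m) (idm pzero, g) = pactm s1 s1 g.
Proof.
by case: hFs => F0 _ _ _; rewrite /= (f_id hF) F0 (act_idm hD) (act_zero hD) (summ0l hD).
Qed.

End MappingCylinderFunctor.

Definition push_lift (C D : pcat) (G : functor C D) (hD : is_cat D) (X Y : Ob C) (h : Mor D) :
  Mor (push G hD) := mkv (P := valid_push G) (X, Y, h) (@idm (push_cat G hD) X).

Definition push_Q (C D : pcat) (G : functor C D) (hD : is_cat D) : functor (push G hD) D :=
  @Functor (push G hD) D (fun X => G X) (fun t => (sval t).2).

Section Push.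
Variables (C D : pcat) (hC : is_pcat C) (hD : is_pcat D) (G : functor C D).
Hypotheses (hG : is_functor G) (hGs : preserves_sums G).
Let cC := pc_cat hC.
Let cD := pc_cat hD.
Local Notation P := (push G (pc_cat hD)).

Local Ltac domcod := repeat first
  [ done
  | progress rewrite ?(f_dom hG) ?(f_cod hG) ?(circ_dom hC) ?(circ_cod hC)
       ?(circinv_dom hC) ?(circinv_cod hC) ?(dom_id cD) ?(cod_id cD)
  | match goal with H : dom ?h = _ |- context [dom ?h] => rewrite H end
  | match goal with H : cod ?h = _ |- context [cod ?h] => rewrite H end
  | rewrite (dom_cmp cD); last by domcod
  | rewrite (cod_cmp cD); last by domcod ].

Lemma push_liftE X Y h : dom h = G X -> cod h = G Y -> sval (push_lift G cD X Y h) = (X, Y, h).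
Proof. by move=> hd hc; apply: mkv_val. Qed.

Lemma push_cmpE (f g : Mor P) : cod f = dom g ->
  sval (cmp g f) = ((sval f).1.1, (sval g).1.2, cmp (sval g).2 (sval f).2).
Proof.
case: f g => [[[X Y] f] /= [fd fc]] [[[Y' Z] g] /= [gd gc]] /= YY'; subst Y'.
by apply: mkv_val; split=> /=; domcod.
Qed.

Lemma push_actmE u v (t : Mor P) : sval (pactm u v t) =
  (pact u (sval t).1.1, pact v (sval t).1.2,
   cmp (fmor G (circ v (sval t).1.2)) (cmp (sval t).2 (fmor G (circinv u (sval t).1.1)))).
Proof. by case: t => [[[X Y] f] /= [fd fc]]; apply: mkv_val; split=> /=; domcod. Qed.

Lemma push_summE (f g : Mor P) : disj (dom f) (dom g) -> disj (cod f) (cod g) ->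
  sval (psumm f g) = (psum (sval f).1.1 (sval g).1.1, psum (sval f).1.2 (sval g).1.2,
                      psumm (sval f).2 (sval g).2).
Proof.
case: hGs => _ Gd Gs _.
case: f g => [[[X Y] f] /= [fd fc]] [[[X' Y'] g] /= [gd gc]] /= dX dY.
have dG := Gd _ _ dX; have cG := Gd _ _ dY.
by apply: mkv_val; split=> /=; rewrite ?(sum_dom hD) ?(sum_cod hD) ?fd ?gd ?fc ?gc // Gs.
Qed.

Lemma push_dom_cmp (f g : Mor P) : cod f = dom g -> dom (cmp g f) = dom f.
Proof. by move=> fg; apply: (congr1 (fun t => t.1.1) (push_cmpE fg)). Qed.

Lemma push_cod_cmp (f g : Mor P) : cod f = dom g -> cod (cmp g f) = cod g.
Proof. by move=> fg; apply: (congr1 (fun t => t.1.2) (push_cmpE fg)). Qed.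

Lemma push_dom_summ (f g : Mor P) : disj (dom f) (dom g) -> disj (cod f) (cod g) ->
  dom (psumm f g) = psum (dom f) (dom g).
Proof. by move=> dfg cfg; apply: (congr1 (fun t => t.1.1) (push_summE dfg cfg)). Qed.

Lemma push_cod_summ (f g : Mor P) : disj (dom f) (dom g) -> disj (cod f) (cod g) ->
  cod (psumm f g) = psum (cod f) (cod g).
Proof. by move=> dfg cfg; apply: (congr1 (fun t => t.1.2) (push_summE dfg cfg)). Qed.

Lemma push_is_cat : is_cat P.
Proof.
split=> //; [exact: push_dom_cmp | exact: push_cod_cmp | | |].
- move=> t; apply: sval_inj; rewrite push_cmpE //.
  by case: t => [[[X Y] f] [/= fd fc]]; rewrite /= (idl cD).
- move=> t; apply: sval_inj; rewrite push_cmpE //.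
  by case: t => [[[X Y] f] [/= fd fc]]; rewrite /= (idr cD).
move=> f g h fg gh; apply: sval_inj.
rewrite !push_cmpE ?push_cod_cmp ?push_dom_cmp //=.
case: f g h fg gh => [[[X Y] f] /= [fd fc]] [[[Y1 Z] g] /= [gd gc]].
move=> [[[Z1 W] h] /= [hd hc]] /= YY ZZ.
by subst Y1 Z1; rewrite (cmp_assoc cD) //; domcod.
Qed.

Lemma push_act_idm u (X : Ob P) : pactm u u (idm X) = idm (pact u X).
Proof.
apply: sval_inj; rewrite push_actmE /= (idl cD); last by domcod.
by rewrite -(f_cmp hG) ?(circinv_cod hC) ?(circ_dom hC) // (circ_circinv hC) (f_id hG).
Qed.

Lemma push_act_cmp u v w (f g : Mor P) : cod f = dom g ->
  cmp (pactm v w g) (pactm u v f) = pactm u w (cmp g f).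
Proof.
move=> fg; apply: sval_inj.
rewrite push_cmpE; last by rewrite /cod /dom /= !push_actmE /=; congr (pact _ _); apply: fg.
rewrite !push_actmE push_cmpE //.
case: f g fg => [[[X Y] f] /= [fd fc]] [[[Y' Z] g] /= [gd gc]] /= YY'; subst Y'.
congr (_, _); apply: (cmp_conj_cancel cD); domcod.
by rewrite -(f_cmp hG) ?(circ_cod hC) ?(circinv_dom hC) // (circinv_circ hC) (f_id hG); domcod.
Qed.

Lemma push_act_unit_mor (t : Mor P) : pactm idw idw t = t.
Proof.
apply: sval_inj; rewrite push_actmE; case: t => [[[X Y] f] [/= fd fc]].
rewrite (circ_id hC) (circinv_id hC) !(f_id hG) !(act_unit_ob hC) (idr cD) ?(idl cD) //; domcod.
Qed.

Lemma push_act_assoc_mor u u' v v' (t : Mor P) :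
  pactm u u' (pactm v v' t) = pactm (compw u v) (compw u' v') t.
Proof.
apply: sval_inj; rewrite !push_actmE; case: t => [[[X Y] f] [/= fd fc]].
rewrite !(act_assoc_ob hC) (cmp_conj_conj cD); try by domcod.
rewrite -!(f_cmp hG) ?(circ_cod hC) ?(circ_dom hC) ?(circinv_cod hC) ?(circinv_dom hC) //.
by rewrite (circ_comp hC) (circinv_comp hC).
Qed.

Lemma push_sum_idm (X Y : Ob P) : disj X Y -> psumm (idm X) (idm Y) = idm (psum X Y).
Proof.
case: hGs => _ Gd Gs _ dXY; apply: sval_inj.
by rewrite push_summE //= Gs // (sum_idm hD (Gd _ _ dXY)).
Qed.

Lemma push_sum_cmp (f g f' g' : Mor P) : cod f = dom f' -> cod g = dom g' ->
  disj (dom f) (dom g) -> disj (cod f) (cod g) -> disj (cod f') (cod g') ->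
  psumm (cmp f' f) (cmp g' g) = cmp (psumm f' g') (psumm f g).
Proof.
case: hGs => _ Gd _ _ ff' gg' dd cc cc'; apply: sval_inj.
have dd' : disj (dom f') (dom g') by rewrite -ff' -gg'.
have ec : cod (psumm f g) = dom (psumm f' g').
  by rewrite push_cod_summ ?push_dom_summ // ff' gg'.
rewrite (push_cmpE ec) !push_summE ?push_dom_cmp ?push_cod_cmp // !push_cmpE //=.
clear ec dd'; case: f g f' g' ff' gg' dd cc cc' => [[[X Y] f] /= [fd fc]] [[[X' Y'] g] /= [gd gc]].
move=> [[[Y1 Z] f'] /= [fd' fc']] [[[Y1' Z'] g'] /= [gd' gc']] /= YY1 YY1' dd cc cc'.
by subst Y1 Y1'; rewrite (sum_cmp hD) //; domcod; apply: Gd.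
Qed.

Lemma push_sum_unit_mor (t : Mor P) : psumm t (idm pzero) = t.
Proof.
case: hGs => G0 _ _ _; apply: sval_inj.
rewrite push_summE; try exact: (disj0r hC).
by case: t => [[[X Y] f] [/= fd fc]]; rewrite !(sum_unit_ob hC) G0 (sum_unit_mor hD).
Qed.

Lemma push_sum_assoc_mor (f g h : Mor P) :
  disj (dom f) (dom g) -> disj (dom g) (dom h) -> disj (dom f) (dom h) ->
  disj (cod f) (cod g) -> disj (cod g) (cod h) -> disj (cod f) (cod h) ->
  psumm (psumm f g) h = psumm f (psumm g h).
Proof.
case: hGs => _ Gd _ _ dfg dgh dfh cfg cgh cfh; apply: sval_inj.
rewrite !push_summE ?push_dom_summ ?push_cod_summ //;
  try by [apply: (disj_sumr hC) | apply: (disj_suml hC)].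
case: f g h dfg dgh dfh cfg cgh cfh => [[[X Y] f] /= [fd fc]] [[[X' Y'] g] /= [gd gc]].
move=> [[[X'' Y''] h] /= [hd hc]] /= dfg dgh dfh cfg cgh cfh.
by rewrite !(sum_assoc_ob hC) // (sum_assoc_mor hD) //; domcod; apply: Gd.
Qed.

Lemma push_sum_comm_mor (f g : Mor P) : disj (dom f) (dom g) -> disj (cod f) (cod g) ->
  psumm f g = psumm g f.
Proof.
case: hGs => _ Gd _ _ dfg cfg; apply: sval_inj.
rewrite !push_summE // ; try exact: disj_sym.
case: f g dfg cfg => [[[X Y] f] /= [fd fc]] [[[X' Y'] g] /= [gd gc]] /= dfg cfg.
by rewrite (sum_comm_ob hC dfg) (sum_comm_ob hC cfg) (sum_comm_mor hD) //; domcod; apply: Gd.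
Qed.

Lemma push_sum_act_mor u v (f g : Mor P) : disj (dom f) (dom g) -> disj (cod f) (cod g) ->
  pactm u v (psumm f g) = psumm (pactm u v f) (pactm u v g).
Proof.
case: hGs => _ Gd _ Gsm dfg cfg; apply: sval_inj.
rewrite push_actmE push_summE // push_summE; last 2 first.
- by rewrite /dom /= !push_actmE; apply: (disj_act hC).
- by rewrite /cod /= !push_actmE; apply: (disj_act hC).
rewrite !push_actmE.
case: f g dfg cfg => [[[X Y] f] /= [fd fc]] [[[X' Y'] g] /= [gd gc]] /= dfg cfg.
rewrite !(sum_act_ob hC) //; congr (_, _).
have du := disj_act hC (u := u) dfg; have dv := disj_act hC (u := v) cfg.
rewrite (circ_sum hC) // (circinv_sum hC) // !Gsm; try by domcod.
rewrite (sum_cmp hD (f := cmp f (fmor G (circinv u X)))); try by domcod; apply: Gd.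
by rewrite (sum_cmp hD (f := fmor G (circinv u X))) //; domcod; apply: Gd.
Qed.

Lemma push_is_pcat : is_pcat P.
Proof.
split.
- exact: push_is_cat.
- by move=> u v t; apply: (congr1 (fun t => t.1.1) (push_actmE u v t)).
- by move=> u v t; apply: (congr1 (fun t => t.1.2) (push_actmE u v t)).
- exact: push_act_idm.
- exact: push_act_cmp.
- exact: (act_unit_ob hC).
- exact: push_act_unit_mor.
- exact: (act_assoc_ob hC).
- exact: push_act_assoc_mor.
- exact: (fin_supp hC).
- exact: (zero_supp hC).
- exact: push_dom_summ.
- exact: push_cod_summ.
- exact: push_sum_idm.
- exact: push_sum_cmp.
- exact: (sum_unit_ob hC).
- exact: push_sum_unit_mor.
- exact: (sum_assoc_ob hC).
- exact: push_sum_assoc_mor.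
- exact: (sum_comm_ob hC).
- exact: push_sum_comm_mor.
- exact: (sum_act_ob hC).
- exact: push_sum_act_mor.
Qed.

Lemma push_IE (f : Mor C) : sval (fmor (push_I G cD) f) = (dom f, cod f, fmor G f).
Proof. by apply: mkv_val; split; rewrite /= ?(f_dom hG) ?(f_cod hG). Qed.

Lemma push_I_pmorph : is_pmorph (push_I G cD).
Proof.
case: hGs => G0 Gd Gs Gsm.
split; first split.
- by move=> f; apply: (congr1 (fun t => t.1.1) (push_IE f)).
- by move=> f; apply: (congr1 (fun t => t.1.2) (push_IE f)).
- by move=> X; apply: sval_inj; rewrite push_IE (dom_id cC) (cod_id cC) (f_id hG).
- move=> f g fg; apply: sval_inj.
  rewrite push_cmpE; last by rewrite /cod /dom /= !push_IE.
  by rewrite !push_IE (f_cmp hG) // (dom_cmp cC) // (cod_cmp cC).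
split=> //.
- move=> u v f; apply: sval_inj; rewrite push_IE push_actmE push_IE /= (act_dom hC) (act_cod hC).
  rewrite {1}(actm_conj hC u v f) !(f_cmp hG) ?(circinv_cod hC) //.
  by rewrite (cod_cmp cC) ?(circinv_cod hC) // (circ_dom hC).
- move=> f g dfg cfg; apply: sval_inj.
  rewrite push_IE push_summE; try by rewrite /cod /dom /= !push_IE.
  by rewrite !push_IE /= (sum_dom hC) // (sum_cod hC) // Gsm.
Qed.

Lemma push_Q_functor : is_functor (push_Q G cD).
Proof.
split=> [t|t|X|f g fg] //=; first by case: (proj2_sig t).
- by case: (proj2_sig t).
- by rewrite push_cmpE.
Qed.

Lemma push_Q_faithful : faithful (push_Q G cD).
Proof.
move=> [[[X Y] f] ?] [[[X' Y'] g] ?] /= XX' YY' fg; apply: sval_inj => /=.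
by rewrite XX' YY' fg.
Qed.

Lemma push_Q_full : full_by (push_Q G cD) (push_lift G cD).
Proof.
move=> X Y h hd hc; have liftE := push_liftE hd hc.
by split; rewrite /dom /cod /fmor /= liftE.
Qed.

Lemma push_I_Q : fcomp (push_I G cD) (push_Q G cD) = G.
Proof. by apply: functor_eq => // f; rewrite /= push_IE. Qed.

End Push.

Lemma pmorph_comp (A B E : pcat) (K : functor A B) (H : functor B E) :
  is_pmorph K -> is_pmorph H -> (forall X Y : Ob A, disj X Y -> disj (K X) (K Y)) ->
  is_pmorph (fcomp K H).
Proof.
move=> [hK [K1 K2 K3 K4 K5]] [hH [H1 H2 H3 H4 H5]] Kd.
split; first exact: functor_comp.
split=> /= [u X|u v f||X Y dXY|f g dfg cfg]; first by rewrite K1 H1.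
- by rewrite K2 H2.
- by rewrite K3 H3.
- by rewrite K4 // H4 //; apply: Kd.
- by rewrite K5 // H5 // ?(f_dom hK) ?(f_cod hK); apply: Kd.
Qed.

Section Inclusions.
Variables (C D : pcat) (hC : is_pcat C) (hD : is_pcat D).

Lemma incl1_pmorph : is_pmorph (incl1 C D).
Proof.
have cD := pc_cat hD.
split; first split=> [f|f|X|f g fg] /=; rewrite ?(dom_id cD) ?(cod_id cD) //.
  by rewrite (idl cD) ?(cod_id cD).
split=> /= [u X|u v f||X Y dXY|f g dfg cfg].
- by rewrite (act_zero hD).
- by rewrite (actm_zero hD).
- by [].
- by rewrite (sum_unit_ob hD).
- by rewrite (sum_unit_mor hD).
Qed.

Lemma incl2_pmorph : is_pmorph (incl2 C D).
Proof.
have cC := pc_cat hC.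
split; first split=> [f|f|X|f g fg] /=; rewrite ?(dom_id cC) ?(cod_id cC) //.
  by rewrite (idl cC) ?(cod_id cC).
split=> /= [u X|u v f||X Y dXY|f g dfg cfg].
- by rewrite (act_zero hC).
- by rewrite (actm_zero hC).
- by [].
- by rewrite (sum0l hC).
- by rewrite (summ0l hC).
Qed.

End Inclusions.

Section Cylinder.
Variables (C D : pcat) (hC : is_pcat C) (hD : is_pcat D) (F : functor C D) (m : injw2).
Hypotheses (hF : is_functor F) (hFs : preserves_sums F).
Local Notation cD := (pc_cat hD).
Let hCD := prod_is_pcat hC hD.
Let hG := Fmu_functor hD m hF.
Let hGs := Fmu_sums hC hD m hF hFs.
Local Notation Q := (push_Q (Fmu F m) cD).

Lemma I1_pmorph : is_pmorph (I1 F m cD).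
Proof.
exact: pmorph_comp (incl1_pmorph C hD) (push_I_pmorph hCD hD hG hGs) (disj_pair_l hC hD).
Qed.

Lemma I2_pmorph : is_pmorph (I2 F m cD).
Proof.
exact: pmorph_comp (incl2_pmorph D hC) (push_I_pmorph hCD hD hG hGs) (disj_pair_r hC hD).
Qed.

Lemma I1_Q : fcomp (I1 F m cD) Q = fcomp F (actf D (slice m i0)).
Proof.
rewrite -[fcomp _ Q]/(fcomp (incl1 C D) (fcomp (push_I (Fmu F m) cD) Q)) (push_I_Q hD hG).
by apply: functor_eq => [X|f] /=; [apply: Fmu_left | apply: Fmu_left_mor].
Qed.

Lemma I2_Q : fcomp (I2 F m cD) Q = fcomp (fid D) (actf D (slice m i1)).
Proof.
rewrite -[fcomp _ Q]/(fcomp (incl2 C D) (fcomp (push_I (Fmu F m) cD) Q)) (push_I_Q hD hG).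
by apply: functor_eq => [X|f] /=; [apply: Fmu_right | apply: Fmu_right_mor].
Qed.

Lemma I1_equiv : is_equiv F -> is_equiv (I1 F m cD).
Proof.
move=> eF; apply: (equiv_of_faithful_comp (push_is_cat hD (Fmu F m))
  (push_Q_functor hD (Fmu F m)) (@push_Q_faithful _ _ hD _) (@push_Q_full _ _ hD _) I1_pmorph.1).
rewrite I1_Q.
exact: (equiv_comp_natiso (pc_cat hC) cD eF (actf_functor hD _) (actf_natiso hD _)).
Qed.

Lemma I2_equiv : is_equiv (I2 F m cD).
Proof.
apply: (equiv_of_faithful_comp (push_is_cat hD (Fmu F m))
  (push_Q_functor hD (Fmu F m)) (@push_Q_faithful _ _ hD _) (@push_Q_full _ _ hD _) I2_pmorph.1).
rewrite I2_Q.
exact: (equiv_comp_natiso cD cD (equiv_id cD) (actf_functor hD _) (actf_natiso hD _)).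
Qed.

End Cylinder.

Theorem corollary3p14 (C D : pcat) (F : functor C D) (m : injw2)
  (hC : is_pcat C) (hD : is_pcat D)
  (hF : is_functor F) (hFs : preserves_sums F) :
  [/\ is_functor (Fmu F m) /\ preserves_sums (Fmu F m),
      is_pcat (Cyl F m (pc_cat hD)),
      is_pmorph (I1 F m (pc_cat hD)) /\ is_pmorph (I2 F m (pc_cat hD)),
      is_equiv F -> is_equiv (I1 F m (pc_cat hD)) &
      is_equiv (I2 F m (pc_cat hD))].
Proof.
have hG := Fmu_functor hD m hF; have hGs := Fmu_sums hC hD m hF hFs.
split.
- by split.
- exact: (push_is_pcat (prod_is_pcat hC hD) hD hG hGs).
- by split; [apply: (I1_pmorph hC) | apply: (I2_pmorph hC)].
- exact: (I1_equiv hC).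
- exact: (I2_equiv hC).
Qed.
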